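(* Let $X$ be a real Hilbert space, $f:X\to\mathbb{R}\cup\{+\infty\}$ a proper $\Phi_{lsc}$-convex function and $\bar x\in\mathrm{dom}(f)$. Then $\partial_{lsc}f(\bar x)\neq\emptyset$ if and only if $\partial_P f(\bar x)\ne\emptyset$.
   Context: $\Phi_{lsc}$ is the class of functions $\varphi(x)=-a\|x\|^2+\langle v,x\rangle+c$ ($a\ge0$, $v\in X^*$, $c\in\mathbb{R}$); $f$ is $\Phi_{lsc}$-convex if it is the pointwise supremum of the $\varphi\in\Phi_{lsc}$ with $\varphi\le f$; proper means at least one such $\varphi$ exists and $\mathrm{dom}(f)=\{x:f(x)<+\infty\}\ne\emptyset$. $\partial_{lsc}f(\bar x)$ is the set of $(a,v)\in\mathbb{R}_+\times X^*$ with $f(x)-f(\bar x)\ge\langle v,x-\bar x\rangle-a\|x\|^2+a\|\bar x\|^2$ for all $x\in X$. The proximal subdifferential $\partial_Pf(\bar x)$ is the set of $v\in X^*$ for which there exist $\delta>0$ and $\rho\ge0$ with $f(x)\ge f(\bar x)+\langle v,x-\bar x\rangle-\tfrac12\rho\|x-\bar x\|^2$ for all $x$ with $\|x-\bar x\|<\delta$. *)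

From Stdlib Require Import Reals.
Open Scope R_scope.

Record HilbertSpace := {
  hcar :> Type;
  hadd : hcar -> hcar -> hcar;
  hopp : hcar -> hcar;
  hzero : hcar;
  hscal : R -> hcar -> hcar;
  hinner : hcar -> hcar -> R;
  hadd_assoc : forall x y z, hadd x (hadd y z) = hadd (hadd x y) z;
  hadd_comm : forall x y, hadd x y = hadd y x;
  hadd_zero : forall x, hadd x hzero = x;
  hadd_opp : forall x, hadd x (hopp x) = hzero;
  hscal_one : forall x, hscal 1 x = x;
  hscal_assoc : forall a b x, hscal a (hscal b x) = hscal (a * b) x;
  hscal_distr_l : forall a x y, hscal a (hadd x y) = hadd (hscal a x) (hscal a y);
  hscal_distr_r : forall a b x, hscal (a + b) x = hadd (hscal a x) (hscal b x);
  hinner_sym : forall x y, hinner x y = hinner y x;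
  hinner_add_l : forall x y z, hinner (hadd x y) z = hinner x z + hinner y z;
  hinner_scal_l : forall a x y, hinner (hscal a x) y = a * hinner x y;
  hinner_pos : forall x, 0 <= hinner x x;
  hinner_def : forall x, hinner x x = 0 -> x = hzero;
  hcomplete : forall u : nat -> hcar,
    (forall eps, eps > 0 -> exists N : nat, forall m n, (m >= N)%nat -> (n >= N)%nat ->
        sqrt (hinner (hadd (u m) (hopp (u n))) (hadd (u m) (hopp (u n)))) < eps) ->
    exists l, forall eps, eps > 0 -> exists N : nat, forall n, (n >= N)%nat ->
        sqrt (hinner (hadd (u n) (hopp l)) (hadd (u n) (hopp l))) < eps
}.

Section Ops.
Variable X : HilbertSpace.
Definition hsub (x y : X) : X := hadd X x (hopp X y).
Definition hnorm (x : X) : R := sqrt (hinner X x x).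

(** Topological dual X^*: continuous (= bounded) linear functionals. *)
Definition is_dual (v : X -> R) : Prop :=
  (forall x y, v (hadd X x y) = v x + v y) /\
  (forall a x, v (hscal X a x) = a * v x) /\
  (exists M, forall x, Rabs (v x) <= M * hnorm x).
End Ops.
Arguments hsub {X}.
Arguments hnorm {X}.
Arguments is_dual {X}.

Inductive ERp := Fin (r : R) | PInf.

Definition ERle (a b : ERp) : Prop :=
  match a, b with
  | _, PInf => True
  | PInf, Fin _ => False
  | Fin x, Fin y => x <= y
  end.

Definition ERlt (a b : ERp) : Prop :=
  match a, b with
  | Fin x, PInf => True
  | PInf, _ => False
  | Fin x, Fin y => x < y
  end.

(** real part (used only on points of the domain) *)
Definition ERval (a : ERp) : R := match a with Fin r => r | PInf => 0 end.

Section PhiConvex.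
Variable X : HilbertSpace.

Definition dom (f : X -> ERp) (x : X) : Prop := exists r, f x = Fin r.

Definition phi_lsc (a : R) (v : X -> R) (c : R) (x : X) : R :=
  - a * (hnorm x) ^ 2 + v x + c.

Definition in_Phi_lsc (a : R) (v : X -> R) : Prop := 0 <= a /\ is_dual v.

Definition Phi_minorant (f : X -> ERp) (a : R) (v : X -> R) (c : R) : Prop :=
  in_Phi_lsc a v /\ forall x, ERle (Fin (phi_lsc a v c x)) (f x).

(** f is the pointwise supremum of its Phi_lsc minorants *)
Definition Phi_lsc_convex (f : X -> ERp) : Prop :=
  forall x, forall r : R, ERlt (Fin r) (f x) ->
    exists a v c, Phi_minorant f a v c /\ r < phi_lsc a v c x.
(* (the upper-bound half of "f x = sup" holds by definition of minorant) *)

Definition proper_Phi (f : X -> ERp) : Prop :=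
  (exists a v c, Phi_minorant f a v c) /\ (exists x, dom f x).

Definition subdiff_lsc (f : X -> ERp) (xbar : X) (a : R) (v : X -> R) : Prop :=
  0 <= a /\ is_dual v /\
  forall x, ERle (Fin (ERval (f xbar) + v (hsub x xbar)
                       - a * (hnorm x) ^ 2 + a * (hnorm xbar) ^ 2)) (f x).

Definition subdiff_P (f : X -> ERp) (xbar : X) (v : X -> R) : Prop :=
  is_dual v /\
  exists delta rho, delta > 0 /\ rho >= 0 /\
    forall x, hnorm (hsub x xbar) < delta ->
      ERle (Fin (ERval (f xbar) + v (hsub x xbar)
                 - / 2 * rho * (hnorm (hsub x xbar)) ^ 2)) (f x).
End PhiConvex.
Arguments dom {X}.
Arguments Phi_lsc_convex {X}.
Arguments proper_Phi {X}.
Arguments subdiff_lsc {X}.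
Arguments subdiff_P {X}.

(* Recentred at xbar, the Φ_lsc-subgradient inequality with modulus a is exactly
   a proximal inequality with modulus 2a holding on all of X (the linear part
   absorbs the cross term -2a<xbar, x - xbar>).  Conversely, a proximal
   subgradient only gives the inequality on a ball of radius d. *)

From Stdlib Require Import Reals Lra Psatz.
Open Scope R_scope.

Lemma ERle_Fin_trans (a b : R) (y : ERp) : a <= b -> ERle (Fin b) y -> ERle (Fin a) y.
Proof. destruct y as [y|]; simpl; [lra | trivial]. Qed.

Lemma quadratic_dominates_affine (d B K : R) :
  0 < d -> exists C, forall t, d <= t -> B * t + K <= C * t ^ 2.
Proof.
  intros Hd. assert (HB := Rabs_pos B). assert (HK := Rabs_pos K).
  exists ((Rabs B * d + Rabs K) / d ^ 2). intros t Ht.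
  set (u := t / d).
  assert (Et : t = d * u) by (unfold u; field; lra).
  assert (Hu : 1 <= u).
  { apply Rmult_le_reg_l with d; [exact Hd|]. lra. }
  replace ((Rabs B * d + Rabs K) / d ^ 2 * t ^ 2)
    with ((Rabs B * d + Rabs K) * u ^ 2) by (rewrite Et; field; lra).
  rewrite Et.
  assert (HBu : B * (d * u) <= Rabs B * d * u ^ 2).
  { assert (B * (d * u) <= Rabs B * (d * u))
      by (apply Rmult_le_compat_r; [nra | apply Rle_abs]).
    assert (Rabs B * d * u <= Rabs B * d * u ^ 2)
      by (apply Rmult_le_compat_l; nra).
    lra. }
  assert (HKu : K <= Rabs K * u ^ 2).
  { assert (K <= Rabs K) by apply Rle_abs. assert (1 <= u ^ 2) by nra. nra. }
  lra.
Qed.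

Section InnerProduct.
Variable X : HilbertSpace.
Local Notation ip := (hinner X).

Lemma hinner_add_r (x y z : X) : ip x (hadd X y z) = ip x y + ip x z.
Proof. rewrite !(hinner_sym X x). apply hinner_add_l. Qed.

Lemma hinner_scal_r (a : R) (x y : X) : ip x (hscal X a y) = a * ip x y.
Proof. rewrite !(hinner_sym X x). apply hinner_scal_l. Qed.

Lemma hinner_zero_r (x : X) : ip x (hzero X) = 0.
Proof.
  assert (H := hinner_add_r x (hzero X) (hzero X)).
  rewrite hadd_zero in H. lra.
Qed.

Lemma hnorm_ge0 (x : X) : 0 <= hnorm x.
Proof. apply sqrt_pos. Qed.

Lemma hnorm_sqr (x : X) : hnorm x ^ 2 = ip x x.
Proof. apply pow2_sqrt, hinner_pos. Qed.

Lemma hinner_add_add (x y : X) :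
  ip (hadd X x y) (hadd X x y) = ip x x + 2 * ip x y + ip y y.
Proof. rewrite hinner_add_l, !hinner_add_r, (hinner_sym X y x). ring. Qed.

Lemma Cauchy_Schwarz_sqr (x y : X) : ip x y ^ 2 <= ip x x * ip y y.
Proof.
  destruct (Req_dec (ip y y) 0) as [Hy|Hy].
  - apply hinner_def in Hy. subst y. rewrite !hinner_zero_r.
    assert (T := hinner_pos X x). nra.
  - assert (Hp : 0 < ip y y) by (assert (T := hinner_pos X y); lra).
    (* expand 0 <= ||x + t y||^2 at the minimising t = -<x,y>/||y||^2 *)
    assert (H := hinner_pos X (hadd X x (hscal X (- ip x y / ip y y) y))).
    rewrite hinner_add_add, hinner_scal_r, hinner_scal_l, hinner_scal_r in H.
    replace (ip x x + 2 * (- ip x y / ip y y * ip x y)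
               + - ip x y / ip y y * (- ip x y / ip y y * ip y y))
      with ((ip x x * ip y y - ip x y ^ 2) / ip y y) in H by (field; lra).
    assert (0 <= ip x x * ip y y - ip x y ^ 2).
    { apply Rmult_le_reg_r with (/ ip y y); [apply Rinv_0_lt_compat; lra|].
      rewrite Rmult_0_l. exact H. }
    lra.
Qed.

Lemma Cauchy_Schwarz (x y : X) : Rabs (ip x y) <= hnorm x * hnorm y.
Proof.
  apply Rsqr_incr_0_var.
  - rewrite Rsqr_mult, <- Rsqr_abs, !Rsqr_pow2, !hnorm_sqr. apply Cauchy_Schwarz_sqr.
  - apply Rmult_le_pos; apply hnorm_ge0.
Qed.

Lemma two_hinner_le (x y : X) : 2 * ip x y <= hnorm x ^ 2 + hnorm y ^ 2.
Proof.
  assert (H := Cauchy_Schwarz x y). assert (T := Rle_abs (ip x y)).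
  assert (T2 := pow2_ge_0 (hnorm x - hnorm y)). nra.
Qed.

Lemma hsubK (x y : X) : hadd X (hsub x y) y = x.
Proof.
  unfold hsub. rewrite <- hadd_assoc, (hadd_comm X (hopp X y)), hadd_opp.
  apply hadd_zero.
Qed.

Lemma hnorm_sqr_recentre (x xb : X) :
  hnorm x ^ 2 = hnorm (hsub x xb) ^ 2 + 2 * ip xb (hsub x xb) + hnorm xb ^ 2.
Proof.
  rewrite !hnorm_sqr. rewrite <- (hsubK x xb) at 1 2.
  rewrite hinner_add_add, (hinner_sym X (hsub x xb) xb). ring.
Qed.

Lemma is_dual_add_inner (v : X -> R) (c : R) (xb : X) :
  is_dual v -> is_dual (fun h => v h + c * ip xb h).
Proof.
  intros [Hadd [Hscal [M HM]]]. split; [|split].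
  - intros x y. rewrite Hadd, hinner_add_r. ring.
  - intros a x. rewrite Hscal, hinner_scal_r. ring.
  - exists (M + Rabs c * hnorm xb). intros x.
    eapply Rle_trans; [apply Rabs_triang|]. rewrite Rabs_mult.
    assert (T := HM x).
    assert (Rabs c * Rabs (ip xb x) <= Rabs c * (hnorm xb * hnorm x))
      by (apply Rmult_le_compat_l; [apply Rabs_pos | apply Cauchy_Schwarz]).
    lra.
Qed.

End InnerProduct.

Section Subdifferentials.
Variable X : HilbertSpace.
Variable f : X -> ERp.
Variable xbar : X.

(* the proximal inequality with modulus 2A, required on all of X *)
Definition quadratic_support (w : X -> R) (A : R) : Prop :=
  forall x, ERle (Fin (ERval (f xbar) + w (hsub x xbar) - A * hnorm (hsub x xbar) ^ 2)) (f x).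

Lemma quadratic_support_of_subdiff_lsc (a : R) (v : X -> R) :
  subdiff_lsc f xbar a v ->
  quadratic_support (fun h => v h + (- 2 * a) * hinner X xbar h) a.
Proof.
  intros [_ [_ Hv]] x. eapply ERle_Fin_trans; [|apply Hv].
  rewrite (hnorm_sqr_recentre X x xbar). apply Req_le. ring.
Qed.

Lemma subdiff_lsc_of_quadratic_support (w : X -> R) (A : R) :
  is_dual w -> 0 <= A -> quadratic_support w A ->
  subdiff_lsc f xbar A (fun h => w h + 2 * A * hinner X xbar h).
Proof.
  intros Hw HA Hq. split; [exact HA | split; [apply is_dual_add_inner, Hw|]].
  intros x. eapply ERle_Fin_trans; [|apply Hq].
  rewrite (hnorm_sqr_recentre X x xbar). apply Req_le. ring.
Qed.

Lemma subdiff_P_of_quadratic_support (w : X -> R) (A : R) :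
  is_dual w -> 0 <= A -> quadratic_support w A -> subdiff_P f xbar w.
Proof.
  intros Hw HA Hq. split; [exact Hw|].
  exists 1, (2 * A). split; [lra | split; [lra|]].
  intros x _. eapply ERle_Fin_trans; [|apply Hq]. apply Req_le. field.
Qed.

Lemma Phi_minorant_quadratic_lower_bound (a0 : R) (v0 : X -> R) (c0 : R) :
  Phi_minorant X f a0 v0 c0 ->
  exists a b c, forall x,
    ERle (Fin (c - b * hnorm (hsub x xbar) - a * hnorm (hsub x xbar) ^ 2)) (f x).
Proof.
  intros [[Ha0 Hv0] Hmin].
  pose proof Hv0 as [Hadd [_ [M HM]]].
  exists (2 * a0), M, (v0 xbar + c0 - 2 * a0 * hnorm xbar ^ 2).
  intros x. eapply ERle_Fin_trans; [|apply Hmin]. unfold phi_lsc.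
  set (h := hsub x xbar).
  assert (Ev : v0 x = v0 h + v0 xbar).
  { rewrite <- Hadd. unfold h. now rewrite hsubK. }
  rewrite Ev, (hnorm_sqr_recentre X x xbar). fold h.
  assert (Hip := two_hinner_le X xbar h).
  assert (Hvh : - (M * hnorm h) <= v0 h).
  { assert (T := HM h). rewrite <- Rabs_Ropp in T. assert (T2 := Rle_abs (- v0 h)). lra. }
  assert (a0 * (2 * hinner X xbar h) <= a0 * (hnorm xbar ^ 2 + hnorm h ^ 2))
    by (apply Rmult_le_compat_l; lra).
  lra.
Qed.

Lemma quadratic_support_of_subdiff_P (a0 : R) (v0 : X -> R) (c0 : R) (v : X -> R) :
  Phi_minorant X f a0 v0 c0 -> dom f xbar -> subdiff_P f xbar v ->
  exists A, 0 <= A /\ quadratic_support v A.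
Proof.
  intros Hmin [r Hr] [Hv [d [rho [Hd [Hrho Hloc]]]]].
  destruct (Phi_minorant_quadratic_lower_bound a0 v0 c0 Hmin)
    as [a [b [c Hlow]]].
  pose proof Hv as [_ [_ [M HM]]].
  destruct (quadratic_dominates_affine d (M + b) (r - c) Hd) as [C HCt].
  exists (Rmax (/ 2 * rho) (a + C)). split.
  { eapply Rle_trans; [|apply Rmax_l]. lra. }
  intros x. set (h := hsub x xbar).
  assert (Ht0 : 0 <= hnorm h ^ 2) by apply pow2_ge_0.
  destruct (Rlt_le_dec (hnorm h) d) as [Hnear|Hfar].
  - eapply ERle_Fin_trans; [|apply (Hloc x Hnear)]. fold h.
    assert (/ 2 * rho * hnorm h ^ 2 <= Rmax (/ 2 * rho) (a + C) * hnorm h ^ 2)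
      by (apply Rmult_le_compat_r; [exact Ht0 | apply Rmax_l]).
    lra.
  - eapply ERle_Fin_trans; [|apply Hlow]. fold h. rewrite Hr. simpl.
    assert (T := HCt _ Hfar).
    assert (v h <= M * hnorm h) by (eapply Rle_trans; [apply Rle_abs | apply HM]).
    assert ((a + C) * hnorm h ^ 2 <= Rmax (/ 2 * rho) (a + C) * hnorm h ^ 2)
      by (apply Rmult_le_compat_r; [exact Ht0 | apply Rmax_r]).
    lra.
Qed.

End Subdifferentials.

Theorem mainTheorem8 (X : HilbertSpace) (f : X -> ERp) (xbar : X) :
  proper_Phi f -> Phi_lsc_convex f -> dom f xbar ->
  ((exists a v, subdiff_lsc f xbar a v) <-> (exists v, subdiff_P f xbar v)).
Proof.
  intros [[a0 [v0 [c0 Hmin]]] _] _ Hdom. split.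
  - intros [a [v Hsub]]. pose proof Hsub as [Ha [Hv _]].
    exists (fun h => v h + (- 2 * a) * hinner X xbar h).
    apply (subdiff_P_of_quadratic_support X f xbar _ a).
    + apply is_dual_add_inner, Hv.
    + exact Ha.
    + apply quadratic_support_of_subdiff_lsc, Hsub.
  - intros [v Hsub].
    destruct (quadratic_support_of_subdiff_P X f xbar a0 v0 c0 v Hmin Hdom Hsub)
      as [A [HA Hq]].
    exists A, (fun h => v h + 2 * A * hinner X xbar h).
    apply subdiff_lsc_of_quadratic_support; [apply Hsub | exact HA | exact Hq].
Qed.
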